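(* Let $a,b,m>0$ be real numbers. Suppose $p,q$ are increasing functions on the positive integers with \[\frac{p(n)}{n^m}\to a\quad\text{and}\quad\frac{q(n)}{n^m}\to b.\] Let $h_n:=\frac{1}{p(n)}$ and $k_n:=\frac{1}{q(n)}$. Let $f$ be a real valued function defined on $D=\{0,h_1,-k_1,h_2,-k_2,\ldots\}$ and let $R,L$ be real numbers. If $f(0)=0$ and \[\frac{f(h_n)}{h_n}\to R\quad\text{and}\quad\frac{f(-k_n)}{-k_n}\to L,\] then every real number between $L$ and $R$ is a sequential cord derivative of $f$ at $0$.
   Context: $L'\in\overline{\mathbb{R}}=\mathbb{R}\cup\{\pm\infty\}$ is a sequential cord derivative of $f$ at $0$ if there are sequences $h'_n>0$, $k'_n>0$ with $h'_n\to0$, $k'_n\to0$, $h'_n\in D$, $-k'_n\in D$ for all $n$, and $\frac{f(h'_n)-f(-k'_n)}{h'_n+k'_n}\to L'$. *)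

From Stdlib Require Import Reals.
From Coquelicot Require Import Coquelicot.
Open Scope R_scope.

Definition seq_cord_derivative (D : R -> Prop) (f : R -> R) (L' : Rbar) : Prop :=
  exists h k : nat -> R,
    (forall n, 0 < h n /\ 0 < k n /\ D (h n) /\ D (- k n)) /\
    is_lim_seq h 0 /\ is_lim_seq k 0 /\
    is_lim_seq (fun n => (f (h n) - f (- k n)) / (h n + k n)) L'.

Definition cord_domain (p q : nat -> R) (x : R) : Prop :=
  x = 0 \/ (exists n, (1 <= n)%nat /\ x = / p n)
        \/ (exists n, (1 <= n)%nat /\ x = - / q n).

From Stdlib Require Import Reals Lra Lia ClassicalEpsilon.
From Coquelicot Require Import Coquelicot.
Open Scope R_scope.

(* Writing h = 1/p(n) and k = 1/q(j), the cord quotient (f(h) - f(-k))/(h + k)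
   is the convex combination  w f(h)/h + (1 - w) f(-k)/(-k)  with weight
   w = q(j)/(p(n) + q(j)).  Since p and q tend to infinity and q(j+1)/q(j) -> 1,
   for any d > 0 and a fixed large n the weights go, as j grows, from below d
   to above 1 - d in steps of size at most d.  So every weight in [0,1] is
   approached along indices n, j -> oo, and the cord quotients along those
   indices converge to the matching convex combination of L and R. *)

Lemma Rpower_INR_lim_p_infty (m : R) :
  0 < m -> is_lim_seq (fun n => Rpower (INR n) m) p_infty.
Proof.
  intros Hm. apply is_lim_seq_spec. intros M.
  set (y := Rmax M 1).
  assert (Hy : 0 < y) by (unfold y; apply Rlt_le_trans with 1; [lra | apply Rmax_r]).
  destruct (proj2 (is_lim_seq_spec _ _) is_lim_seq_INR (Rpower y (/ m))) as [N HN].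
  exists N. intros n Hn.
  apply Rle_lt_trans with y; [apply Rmax_l |].
  replace y with (Rpower (Rpower y (/ m)) m) at 1.
  - apply Rlt_Rpower_l; [exact Hm |]. split; [apply exp_pos | exact (HN n Hn)].
  - rewrite Rpower_mult, Rinv_l by lra. apply Rpower_1, Hy.
Qed.

Lemma is_lim_seq_p_infty_of_power_asympt (p : nat -> R) (a m : R) :
  0 < a -> 0 < m -> is_lim_seq (fun n => p n / Rpower (INR n) m) a ->
  is_lim_seq p p_infty.
Proof.
  intros Ha Hm Hp.
  apply is_lim_seq_ext with (fun n => p n / Rpower (INR n) m * Rpower (INR n) m).
  { intros n. field. apply Rgt_not_eq, exp_pos. }
  eapply is_lim_seq_mult; [exact Hp | exact (Rpower_INR_lim_p_infty m Hm) |].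
  simpl. unfold is_Rbar_mult, Rbar_mult'.
  destruct (Rle_dec 0 a) as [Ha' |]; [| lra].
  destruct (Rle_lt_or_eq_dec 0 a Ha'); [reflexivity | lra].
Qed.

Lemma is_lim_seq_inv_INR_succ : is_lim_seq (fun n => / INR (S n)) 0.
Proof.
  apply (is_lim_seq_incr_1 (fun n => / INR n)).
  apply (is_lim_seq_inv _ _ is_lim_seq_INR). discriminate.
Qed.

Lemma is_lim_seq_succ_ratio_of_power_asympt (q : nat -> R) (b m : R) :
  0 < b -> (forall n, (1 <= n)%nat -> 0 < q n) ->
  is_lim_seq (fun n => q n / Rpower (INR n) m) b ->
  is_lim_seq (fun n => q (S n) / q n) 1.
Proof.
  intros Hb Hq Hlim.
  apply is_lim_seq_incr_1.
  assert (Hlim1 := proj1 (is_lim_seq_incr_1 _ _) Hlim).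
  assert (Hlim2 := proj1 (is_lim_seq_incr_1 _ _) Hlim1).
  assert (Hpow : is_lim_seq (fun n => Rpower (1 + / INR (S n)) m) (Rpower (1 + 0) m)).
  { apply (is_lim_seq_continuous (fun x => Rpower x m)).
    - apply derivable_continuous_pt. eexists. apply derivable_pt_lim_power. lra.
    - apply is_lim_seq_plus'; [apply is_lim_seq_const | exact is_lim_seq_inv_INR_succ]. }
  unfold Rpower at 2 in Hpow. rewrite Rplus_0_r, ln_1, Rmult_0_r, exp_0 in Hpow.
  (* q(n+2)/q(n+1) = [q(n+2)/(n+2)^m] / [q(n+1)/(n+1)^m] * (1 + 1/(n+1))^m *)
  replace 1 with (b / b * 1) by (field; lra).
  eapply is_lim_seq_ext;
    [| exact (is_lim_seq_mult' _ _ _ _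
                (is_lim_seq_div' _ _ _ _ Hlim2 Hlim1 (Rgt_not_eq _ _ Hb)) Hpow)].
  intros n. cbv beta.
  assert (Q1 : 0 < q (S n)) by (apply Hq; lia).
  assert (Q2 : 0 < q (S (S n))) by (apply Hq; lia).
  assert (HI : 0 < INR (S n)) by (apply lt_0_INR; lia).
  assert (Hsucc : INR (S (S n)) = INR (S n) * (1 + / INR (S n)))
    by (rewrite (S_INR (S n)); field; lra).
  rewrite Hsucc, <- Rpower_mult_distr
    by (try apply Rplus_lt_0_compat; try apply Rinv_0_lt_compat; lra).
  assert (P1 := exp_pos (m * ln (INR (S n)))).
  assert (P2 := exp_pos (m * ln (1 + / INR (S n)))).
  unfold Rpower. field. repeat split; lra.
Qed.

Lemma discrete_ivt (g : nat -> R) (J k : nat) (lam d : R) :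
  (forall j, (J <= j)%nat -> g (S j) - g j <= d) ->
  g J < lam -> lam <= g (J + k)%nat ->
  exists j, (J <= j)%nat /\ lam <= g j <= lam + d.
Proof.
  intros Hstep HJ. induction k as [| k IH]; intros Hk.
  - rewrite Nat.add_0_r in Hk. lra.
  - destruct (Rle_lt_dec lam (g (J + k)%nat)) as [Hle | Hlt]; [exact (IH Hle) |].
    exists (J + S k)%nat. split; [lia |].
    rewrite Nat.add_succ_r in *. specialize (Hstep (J + k)%nat ltac:(lia)). lra.
Qed.

Definition cord_weight (P Q : R) : R := Q / (P + Q).

Lemma cord_weight_lt (P Q d : R) :
  0 < P -> 0 < Q -> 0 < d -> Q / d < P -> cord_weight P Q < d.
Proof.
  intros HP HQ Hd HPQ. unfold cord_weight.
  apply Rlt_div_l in HPQ; [| lra].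
  apply Rlt_div_l; nra.
Qed.

Lemma cord_weight_gt (P Q d : R) :
  0 < P -> 0 < Q -> 0 < d -> (1 - d) * P / d < Q -> 1 - d < cord_weight P Q.
Proof.
  intros HP HQ Hd HPQ. unfold cord_weight.
  apply Rlt_div_l in HPQ; [| lra].
  apply Rlt_div_r; nra.
Qed.

Lemma cord_weight_succ_le (P Q Q' d : R) :
  0 < P -> 0 < Q -> 0 < Q' -> 0 <= d -> Q' / Q <= 1 + d ->
  cord_weight P Q' - cord_weight P Q <= d.
Proof.
  intros HP HQ HQ' Hd Hratio. unfold cord_weight.
  apply Rle_div_l in Hratio; [| lra].
  replace (Q' / (P + Q') - Q / (P + Q)) with (P * (Q' - Q) / ((P + Q) * (P + Q')))
    by (field; lra).
  assert (Hgrowth : P * (Q' - Q) <= d * (P * Q)) by nra.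
  assert (Hden : d * (P * Q) <= d * ((P + Q) * (P + Q'))) by (apply Rmult_le_compat_l; nra).
  apply Rle_div_l; nra.
Qed.

Lemma cord_weights_approx (p q : nat -> R) (lam : R) :
  (forall n, (1 <= n)%nat -> 0 < p n) -> (forall n, (1 <= n)%nat -> 0 < q n) ->
  is_lim_seq p p_infty -> is_lim_seq q p_infty ->
  is_lim_seq (fun n => q (S n) / q n) 1 ->
  0 <= lam <= 1 ->
  forall (eps : R) (N : nat), 0 < eps ->
  exists n j, (N <= n)%nat /\ (N <= j)%nat /\ Rabs (cord_weight (p n) (q j) - lam) < eps.
Proof.
  intros Hp Hq Hp_infty Hq_infty Hratio Hlam eps N Heps.
  set (d := Rmin (eps / 2) (1 / 2)).
  assert (Hd : 0 < d <= eps / 2 /\ d <= 1 / 2).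
  { unfold d. split; [split; [apply Rmin_case; lra | apply Rmin_l] | apply Rmin_r]. }
  destruct (proj2 (is_lim_seq_spec _ _) Hratio (mkposreal d (proj1 (proj1 Hd))))
    as [J0 HJ0].
  set (J := Nat.max (Nat.max J0 N) 1).
  destruct (proj2 (is_lim_seq_spec _ _) Hp_infty (q J / d)) as [N1 HN1].
  set (n := Nat.max (Nat.max N1 N) 1).
  destruct (proj2 (is_lim_seq_spec _ _) Hq_infty ((1 - d) * p n / d)) as [N2 HN2].
  set (j1 := Nat.max N2 J).
  set (g := fun j => cord_weight (p n) (q j)).
  assert (Hpn : 0 < p n) by (apply Hp; unfold n; lia).
  assert (HgJ : g J < d).
  { apply cord_weight_lt; [exact Hpn | apply Hq; unfold J; lia | lra |].
    apply HN1. unfold n; lia. }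
  assert (Hgj1 : 1 - d < g j1).
  { apply cord_weight_gt; [exact Hpn | apply Hq; unfold j1, J; lia | lra |].
    apply HN2. unfold j1; lia. }
  assert (Hstep : forall j, (J <= j)%nat -> g (S j) - g j <= d).
  { intros j Hj. specialize (HJ0 j ltac:(unfold J in Hj; lia)). simpl in HJ0.
    apply Rabs_lt_between' in HJ0.
    apply cord_weight_succ_le; [exact Hpn | apply Hq; unfold J in Hj; lia
                                | apply Hq; lia | lra | lra]. }
  (* Weights never reach 1, so aim at lam capped by 1 - d. *)
  set (lam' := Rmin lam (1 - d)).
  assert (Hlam' : lam' <= lam /\ lam' <= 1 - d /\ (lam' = lam \/ lam' = 1 - d)).
  { unfold lam'. split; [apply Rmin_l | split; [apply Rmin_r | apply Rmin_case; auto]]. }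
  destruct (Rle_lt_dec lam' (g J)) as [Hreached | Hbelow].
  - exists n, J. split; [unfold n; lia | split; [unfold J; lia |]].
    apply Rabs_def1; fold (g J); lra.
  - destruct (discrete_ivt g J (j1 - J) lam' d Hstep Hbelow) as [j [Hj Hgj]].
    { replace (J + (j1 - J))%nat with j1 by (unfold j1; lia). lra. }
    exists n, j. split; [unfold n; lia | split; [unfold J in Hj; lia |]].
    apply Rabs_def1; fold (g j); lra.
Qed.

Lemma filterlim_eventually_of_ge (phi : nat -> nat) :
  (forall N, (N <= phi N)%nat) -> filterlim phi eventually eventually.
Proof. intros Hphi P [N HN]. exists N. intros n Hn. apply HN. specialize (Hphi n). lia. Qed.

Lemma diagonal_index_sequences (w : nat -> nat -> R) (lam : R) :
  (forall (eps : R) (N : nat), 0 < eps ->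
     exists n j, (N <= n)%nat /\ (N <= j)%nat /\ Rabs (w n j - lam) < eps) ->
  exists sigma tau : nat -> nat,
    (forall N, (S N <= sigma N)%nat /\ (S N <= tau N)%nat) /\
    is_lim_seq (fun N => w (sigma N) (tau N)) lam.
Proof.
  intros Happrox.
  destruct (choice (fun N (nj : nat * nat) =>
      (S N <= fst nj)%nat /\ (S N <= snd nj)%nat /\
      Rabs (w (fst nj) (snd nj) - lam) < / INR (S N))) as [sel Hsel].
  { intros N.
    destruct (Happrox (/ INR (S N)) (S N)) as [n [j Hnj]];
      [apply Rinv_0_lt_compat, lt_0_INR; lia |].
    exists (n, j). exact Hnj. }
  exists (fun N => fst (sel N)), (fun N => snd (sel N)).
  split; [intros N; split; apply Hsel |].
  apply is_lim_seq_spec. intros eps.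
  destruct (proj2 (is_lim_seq_spec _ _) is_lim_seq_inv_INR_succ eps) as [N0 HN0].
  exists N0. intros N HN. specialize (HN0 N HN).
  destruct (Hsel N) as [_ [_ Hclose]].
  rewrite Rminus_0_r, Rabs_pos_eq in HN0 by (left; apply Rinv_0_lt_compat, lt_0_INR; lia).
  lra.
Qed.

Lemma cord_quotient_cord_weight (f : R -> R) (P Q : R) :
  0 < P -> 0 < Q ->
  (f (/ P) - f (- / Q)) / (/ P + / Q) =
  cord_weight P Q * (f (/ P) / / P) + (1 - cord_weight P Q) * (f (- / Q) / - / Q).
Proof. intros HP HQ. unfold cord_weight. field. lra. Qed.

Lemma is_lim_seq_convex_comb (w u v : nat -> R) (lam l1 l2 : R) :
  is_lim_seq w lam -> is_lim_seq u l1 -> is_lim_seq v l2 ->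
  is_lim_seq (fun n => w n * u n + (1 - w n) * v n) (lam * l1 + (1 - lam) * l2).
Proof.
  intros Hw Hu Hv.
  apply is_lim_seq_plus'; apply is_lim_seq_mult'; auto.
  apply is_lim_seq_minus'; [apply is_lim_seq_const | exact Hw].
Qed.

Lemma between_convex_comb (l r x : R) :
  Rmin l r <= x <= Rmax l r -> exists lam, 0 <= lam <= 1 /\ x = lam * r + (1 - lam) * l.
Proof.
  intros Hx. destruct (Req_dec l r) as [<- | Hlr].
  - exists 1. rewrite Rmin_left, Rmax_left in Hx by lra. lra.
  - exists ((x - l) / (r - l)).
    assert (E : (x - l) / (r - l) * (r - l) = x - l) by (field; lra).
    unfold Rmin, Rmax in Hx. destruct (Rle_dec l r); split; nra.
Qed.

Theorem theorem4p5 (a b m : R) (p q : nat -> R) (f : R -> R) (Rr Ll : R) :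
  0 < a -> 0 < b -> 0 < m ->
  (forall n, (1 <= n)%nat -> 0 < p n) ->
  (forall n, (1 <= n)%nat -> 0 < q n) ->
  (forall n, (1 <= n)%nat -> p n < p (S n)) ->
  (forall n, (1 <= n)%nat -> q n < q (S n)) ->
  is_lim_seq (fun n => p n / Rpower (INR n) m) a ->
  is_lim_seq (fun n => q n / Rpower (INR n) m) b ->
  f 0 = 0 ->
  is_lim_seq (fun n => f (/ p n) / (/ p n)) Rr ->
  is_lim_seq (fun n => f (- / q n) / (- / q n)) Ll ->
  forall x : R, Rmin Ll Rr <= x <= Rmax Ll Rr ->
    seq_cord_derivative (cord_domain p q) f (Finite x).
Proof.
  intros Ha Hb Hm Hp Hq _ _ Hpa Hqb _ HRr HLl x Hx.
  assert (Hp_infty := is_lim_seq_p_infty_of_power_asympt p a m Ha Hm Hpa).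
  assert (Hq_infty := is_lim_seq_p_infty_of_power_asympt q b m Hb Hm Hqb).
  assert (Hratio := is_lim_seq_succ_ratio_of_power_asympt q b m Hb Hq Hqb).
  destruct (between_convex_comb Ll Rr x Hx) as [lam [Hlam ->]].
  destruct (diagonal_index_sequences (fun n j => cord_weight (p n) (q j)) lam
              (cord_weights_approx p q lam Hp Hq Hp_infty Hq_infty Hratio Hlam))
    as [sigma [tau [Hidx Hweights]]].
  assert (Hsigma : filterlim sigma eventually eventually)
    by (apply filterlim_eventually_of_ge; intros N; destruct (Hidx N); lia).
  assert (Htau : filterlim tau eventually eventually)
    by (apply filterlim_eventually_of_ge; intros N; destruct (Hidx N); lia).
  exists (fun N => / p (sigma N)), (fun N => / q (tau N)).
  split; [| split; [| split]].
  - intros N. destruct (Hidx N) as [Hs Ht].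
    split; [apply Rinv_0_lt_compat, Hp; lia |].
    split; [apply Rinv_0_lt_compat, Hq; lia |].
    split; [right; left | right; right]; eexists; split; [| reflexivity | | reflexivity]; lia.
  - apply (is_lim_seq_subseq (fun n => / p n) 0 sigma Hsigma).
    apply (is_lim_seq_inv _ _ Hp_infty). discriminate.
  - apply (is_lim_seq_subseq (fun n => / q n) 0 tau Htau).
    apply (is_lim_seq_inv _ _ Hq_infty). discriminate.
  - eapply is_lim_seq_ext;
      [| exact (is_lim_seq_convex_comb _ _ _ _ _ _ Hweights
                  (is_lim_seq_subseq _ _ _ Hsigma HRr) (is_lim_seq_subseq _ _ _ Htau HLl))].
    intros N. destruct (Hidx N) as [Hs Ht]. symmetry.
    apply cord_quotient_cord_weight; [apply Hp | apply Hq]; lia.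
Qed.
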